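(* Let $k$ be a field, $(C,\Delta)$ a coassociative coalgebra over $k$, $(L,\phi)$ a Lie algebra, and $B$ a Lie module over $L$ via $\psi:L\otimes B\to B$, i.e. $\psi(\phi(x_1,x_2),b)=\psi(x_1,\psi(x_2,b))-\psi(x_2,\psi(x_1,b))$. Let $\Phi(f\otimes g)(c)=\sum\phi(f(c_{(1)}),g(c_{(2)}))$ and $\Psi:Hom(C,L)\otimes Hom(C,B)\to Hom(C,B)$, $\Psi(g\otimes\beta)(c)=\sum\psi(g(c_{(1)}),\beta(c_{(2)}))$. Then $Hom(C,B)$ is a module over the TD Lie algebra $(Hom(C,L),\Phi)$, i.e. $$\Psi\circ(\Phi\otimes1)=\Psi\circ(1\otimes\Psi)-(\Psi\circ(1\otimes\Psi))^{\tau}\circ\tau,\quad\tau=(1\,2)\in S_3;$$ explicitly, for all $f,g\in Hom(C,L)$, $\beta\in Hom(C,B)$, $c\in C$, $$\sum\psi(\phi(f(c_{(1)}),g(c_{(2)})),\beta(c_{(3)}))=\sum\Big(\psi(f(c_{(1)}),\psi(g(c_{(2)}),\beta(c_{(3)})))-\psi(g(c_{(2)}),\psi(f(c_{(1)}),\beta(c_{(3)})))\Big).$$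
   Context: Sweedler notation $\Delta(c)=\sum c_{(1)}\otimes c_{(2)}$, $((\Delta\otimes1)\circ\Delta)(c)=\sum c_{(1)}\otimes c_{(2)}\otimes c_{(3)}$. $\tau$ acts on $Hom(C,L)\otimes Hom(C,L)\otimes Hom(C,B)$ and on $C^{\otimes3}$ by swapping the first two factors; $(\Psi\circ(1\otimes\Psi))^\tau(g_1\otimes g_2\otimes\beta)=\psi\circ(1\otimes\psi)\circ(g_1\otimes g_2\otimes\beta)\circ\tau\circ\Delta^{(2)}$ with $\Delta^{(2)}=(\Delta\otimes1)\circ\Delta$. *)

From HB Require Import structures.
From mathcomp Require Import all_boot all_order all_algebra.
Set Implicit Arguments. Unset Strict Implicit. Unset Printing Implicit Defensive.
Import GRing.Theory.
Local Open Scope ring_scope.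

Section Defs.
Variable k : fieldType.

Definition is_lin (V W : lmodType k) (h : V -> W) : Prop :=
  forall (a : k) (x y : V), h (a *: x + y) = a *: h x + h y.

Definition is_bilin (U V W : lmodType k) (T : U -> V -> W) : Prop :=
  (forall y, is_lin (fun x => T x y)) /\ (forall x, is_lin (T x)).

Definition is_trilin (U V X W : lmodType k) (T : U -> V -> X -> W) : Prop :=
  [/\ forall y z, is_lin (fun x => T x y z),
      forall x z, is_lin (fun y => T x y z) &
      forall x y, is_lin (T x y)].

(* A comultiplication is represented in Sweedler form: Delta c is a finite
   list of pairs (c_(1), c_(2)) with Delta(c) = sum c_(1) (x) c_(2).  Since
   no tensor product is available, equalities in C(x)C and C(x)C(x)C are
   expressed through the universal property (testing against all bi/trilinear
   maps into any k-module). *)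
Variable C : lmodType k.

Definition sweedler2 (Delta : C -> seq (C * C)) (W : lmodType k)
  (T : C -> C -> W) (c : C) : W :=
  \sum_(p <- Delta c) T p.1 p.2.

(* ((Delta (x) 1) o Delta)(c) = sum c_(1) (x) c_(2) (x) c_(3), tested by T *)
Definition sweedler3 (Delta : C -> seq (C * C)) (W : lmodType k)
  (T : C -> C -> C -> W) (c : C) : W :=
  \sum_(p <- Delta c) \sum_(q <- Delta p.1) T q.1 q.2 p.2.

(* ((1 (x) Delta) o Delta)(c), tested by T *)
Definition sweedler3' (Delta : C -> seq (C * C)) (W : lmodType k)
  (T : C -> C -> C -> W) (c : C) : W :=
  \sum_(p <- Delta c) \sum_(q <- Delta p.2) T p.1 q.1 q.2.

Definition coassoc_coalgebra (Delta : C -> seq (C * C)) : Prop :=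
  (* Delta is k-linear C -> C (x) C *)
  (forall (W : lmodType k) (T : C -> C -> W), is_bilin T ->
     is_lin (sweedler2 Delta T)) /\
  (forall (W : lmodType k) (T : C -> C -> C -> W), is_trilin T ->
     forall c, sweedler3 Delta T c = sweedler3' Delta T c).

End Defs.

Section Lie.
Variable k : fieldType.

Definition lie_algebra (L : lmodType k) (phi : L -> L -> L) : Prop :=
  [/\ is_bilin phi,
      forall x, phi x x = 0 &
      forall x y z, phi x (phi y z) + phi y (phi z x) + phi z (phi x y) = 0].

Definition lie_module (L B : lmodType k) (phi : L -> L -> L)
  (psi : L -> B -> B) : Prop :=
  is_bilin psi /\
  forall x1 x2 b, psi (phi x1 x2) b = psi x1 (psi x2 b) - psi x2 (psi x1 b).

Definition convPhi (C L : lmodType k) (Delta : C -> seq (C * C))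
  (phi : L -> L -> L) (f g : C -> L) : C -> L :=
  sweedler2 Delta (fun u v => phi (f u) (g v)).

Definition convPsi (C L B : lmodType k) (Delta : C -> seq (C * C))
  (psi : L -> B -> B) (g : C -> L) (beta : C -> B) : C -> B :=
  sweedler2 Delta (fun u v => psi (g u) (beta v)).

End Lie.

From HB Require Import structures.
From mathcomp Require Import all_boot all_order all_algebra.
Set Implicit Arguments. Unset Strict Implicit.
Import GRing.Theory.
Local Open Scope ring_scope.

(* Both sides of the Sweedler identity are sums over the same index set
   c_(1) (x) c_(2) (x) c_(3), and there the summands agree termwise by the
   module identity for psi.  The operadic form then only needs to unfold the
   two nested convolutions into such triple sums: Psi o (Phi (x) 1) splits the
   first tensor factor, i.e. is a (Delta (x) 1) o Delta sum, while
   Psi o (1 (x) Psi) splits the second one, and coassociativity identifies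
   the two. *)

Section Linear.
Variables (k : fieldType) (V W : lmodType k) (h : V -> W).
Hypothesis h_lin : is_lin h.

Lemma is_linD x y : h (x + y) = h x + h y.
Proof. by rewrite -[x in LHS]scale1r h_lin scale1r. Qed.

Lemma is_lin0 : h 0 = 0.
Proof. by apply: (addrI (h 0)); rewrite -is_linD !addr0. Qed.

Lemma is_lin_sum (I : Type) (s : seq I) (F : I -> V) :
  h (\sum_(i <- s) F i) = \sum_(i <- s) h (F i).
Proof. exact: (big_morph h is_linD is_lin0). Qed.

End Linear.

Section Sweedler.
Variables (k : fieldType) (C : lmodType k) (Delta : C -> seq (C * C)).

Lemma eq_sweedler3 (W : lmodType k) (T1 T2 : C -> C -> C -> W) c :
  (forall u v w, T1 u v w = T2 u v w) ->
  sweedler3 Delta T1 c = sweedler3 Delta T2 c.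
Proof.
by move=> eqT; apply: eq_bigr => p _; apply: eq_bigr => q _; rewrite eqT.
Qed.

Lemma sweedler3B (W : lmodType k) (T1 T2 : C -> C -> C -> W) c :
  sweedler3 Delta (fun u v w => T1 u v w - T2 u v w) c =
  sweedler3 Delta T1 c - sweedler3 Delta T2 c.
Proof. by rewrite /sweedler3 -sumrB; apply: eq_bigr => p _; rewrite -sumrB. Qed.

Lemma sweedler2_nestl (X W : lmodType k) (F : X -> C -> W)
    (G : C -> C -> X) c :
  (forall w, is_lin (F ^~ w)) ->
  sweedler2 Delta (fun u w => F (sweedler2 Delta G u) w) c =
  sweedler3 Delta (fun u v w => F (G u v) w) c.
Proof.
by move=> F_lin; apply: eq_bigr => p _; rewrite (is_lin_sum (F_lin _)).
Qed.

Lemma sweedler2_nestr (X W : lmodType k) (F : C -> X -> W)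
    (G : C -> C -> X) c :
  (forall u, is_lin (F u)) ->
  sweedler2 Delta (fun u w => F u (sweedler2 Delta G w)) c =
  sweedler3' Delta (fun u v w => F u (G v w)) c.
Proof.
by move=> F_lin; apply: eq_bigr => p _; rewrite (is_lin_sum (F_lin _)).
Qed.

End Sweedler.

Section Convolution.
Variables (k : fieldType) (C L B : lmodType k) (Delta : C -> seq (C * C)).
Variables (phi : L -> L -> L) (psi : L -> B -> B).
Hypothesis psi_bilin : is_bilin psi.
Variables (f g : {linear C -> L}) (beta : {linear C -> B}).

Lemma convPsi_convPhi c :
  convPsi Delta psi (convPhi Delta phi f g) beta c =
  sweedler3 Delta (fun u v w => psi (phi (f u) (g v)) (beta w)) c.
Proof.
apply: (sweedler2_nestl Delta (F := fun x w => psi x (beta w))) => w.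
by case: psi_bilin.
Qed.

Lemma is_trilin_convPsi2 :
  is_trilin (fun u v w => psi (f u) (psi (g v) (beta w))).
Proof.
case: psi_bilin => psi_linl psi_linr; split=> [y z | x z | x y] a u1 u2 /=.
- by rewrite linearP psi_linl.
- by rewrite linearP psi_linl psi_linr.
- by rewrite linearP !psi_linr.
Qed.

Lemma convPsi_convPsi c :
  coassoc_coalgebra Delta ->
  convPsi Delta psi f (convPsi Delta psi g beta) c =
  sweedler3 Delta (fun u v w => psi (f u) (psi (g v) (beta w))) c.
Proof.
case=> _ coassoc; rewrite (coassoc _ _ is_trilin_convPsi2).
apply: (sweedler2_nestr Delta (F := fun u x => psi (f u) x)) => u.
by case: psi_bilin.
Qed.

End Convolution.

Theorem proposition5 (k : fieldType) (C L B : lmodType k)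
  (Delta : C -> seq (C * C)) (phi : L -> L -> L) (psi : L -> B -> B)
  (HC : coassoc_coalgebra Delta) (HL : lie_algebra phi)
  (HB : lie_module phi psi)
  (f g : {linear C -> L}) (beta : {linear C -> B}) (c : C) :
  (* operadic form: Psi o (Phi (x) 1) = Psi o (1 (x) Psi) - (Psi o (1 (x) Psi))^tau o tau *)
  convPsi Delta psi (convPhi Delta phi f g) beta c =
    convPsi Delta psi f (convPsi Delta psi g beta) c
    - sweedler3 Delta (fun u v w => psi (g v) (psi (f u) (beta w))) c
  /\
  (* explicit Sweedler form *)
  sweedler3 Delta (fun u v w => psi (phi (f u) (g v)) (beta w)) c =
    sweedler3 Delta (fun u v w =>
      psi (f u) (psi (g v) (beta w)) - psi (g v) (psi (f u) (beta w))) c.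
Proof.
case: HB => psi_bilin psi_act.
have sweedler_form := eq_sweedler3 Delta c
  (fun u v w => psi_act (f u) (g v) (beta w)).
split; last exact: sweedler_form.
by rewrite convPsi_convPhi // convPsi_convPsi // sweedler_form sweedler3B.
Qed.
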